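(* Let $r\ge2$ be an integer. There exists $\alpha_0>0$ such that for every $\alpha\in(0,\alpha_0]$ there exists $\varepsilon_0>0$ such that for every $\varepsilon\in(0,\varepsilon_0]$ there exists $n_0$ such that for all $n\ge n_0$ the following holds. Suppose that $G$ is an $n$-vertex graph that contains at most $\varepsilon n^r$ copies of $K_r$ and $\sigma(G)\ge 2\left(1-\frac{1}{r-1}-\alpha\right)n$. Then $G$ admits a $\sqrt{\alpha}$-independent set of size at least $\frac{n}{r-1}$.
   Context: All graphs are finite and simple. $\sigma(G):=\min\{d(x)+d(y): x\ne y,\ xy\notin E(G)\}$ ($+\infty$ if $G$ is complete). For an $n$-vertex graph $G$ and $\gamma>0$, a set $S\subseteq V(G)$ is $\gamma$-independent if $G[S]$ has at most $\gamma n^2$ edges. *)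

From HB Require Import structures.
From mathcomp Require Import all_boot all_order all_algebra.
From mathcomp Require Export reals.
Set Implicit Arguments. Unset Strict Implicit. Unset Printing Implicit Defensive.
Import Order.TTheory GRing.Theory Num.Theory.
Local Open Scope ring_scope.

(* A simple graph on vertex set 'I_n is a symmetric irreflexive relation adj. *)

Definition deg (n : nat) (adj : rel 'I_n) (x : 'I_n) : nat := #|[set y | adj x y]|.

Definition is_clique (n : nat) (adj : rel 'I_n) (S : {set 'I_n}) : bool :=
  [forall x in S, forall y in S, (x != y) ==> adj x y].

(* number of copies of K_r in G = number of r-vertex cliques *)
Definition num_Kr (n : nat) (adj : rel 'I_n) (r : nat) : nat :=
  #|[set S : {set 'I_n} | (#|S| == r) && is_clique adj S]|.

Definition edges_in (n : nat) (adj : rel 'I_n) (S : {set 'I_n}) : nat :=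
  #|[set e : {set 'I_n} | [&& #|e| == 2, e \subset S & is_clique adj e]]|.

(* sigma(G) >= t  :  min over non-adjacent distinct pairs of d(x)+d(y) is >= t
   (vacuous, i.e. sigma = +oo, when G is complete) *)
Definition sigma_ge (R : realType) (n : nat) (adj : rel 'I_n) (t : R) : Prop :=
  forall x y : 'I_n, x != y -> ~~ adj x y -> t <= (deg adj x + deg adj y)%:R.

Definition gamma_indep (R : realType) (n : nat) (adj : rel 'I_n) (gamma : R)
  (S : {set 'I_n}) : Prop :=
  (edges_in adj S)%:R <= gamma * n%:R ^+ 2.

From HB Require Import structures.
From mathcomp Require Import all_boot all_order all_algebra.
From mathcomp Require Import reals.
From mathcomp Require Import zify ring lra.
Import Order.TTheory GRing.Theory Num.Theory.
Set Implicit Arguments. Unset Strict Implicit. Unset Printing Implicit Defensive.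

(* Induction on r with a loss linear in alpha: for k = r - 1 there is C such that
   every graph with few K_(k+1) and sigma(G) >= 2 (1 - 1/k - alpha) n contains
   (1/k - C alpha) n vertices spanning at most C alpha n^2 edges.  For k = 1 take
   all vertices: the edges are the few K_2.  In the step, the sigma condition makes
   the vertices of degree below (1 - 1/(k+1) - alpha) n pairwise adjacent, so they
   are fewer than n/2, or they would span too many K_(k+2).  Among the others, a
   vertex lying in at most the average number of K_(k+2) has a neighbourhood W of
   size at least n/3 with few K_(k+1); deleting the n - |W| vertices outside W lowers
   degree sums by at most 2 (n - |W|), so G[W] satisfies the hypothesis for k with
   6 alpha.  Finally, for alpha <= 1/(16 C^2), pad the set with at most C alpha n + 1
   vertices to reach n/k: each adds at most n edges, and 2 C alpha n^2 + n is at
   most sqrt(alpha) n^2 once n >= 2/sqrt(alpha). *)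

Lemma expn_subn_le_ffact l r : (l - r) ^ r <= l ^_ r.
Proof.
elim: r l => [|r IH] [|l] //; first by rewrite sub0n exp0n.
rewrite ffactSS subSS expnS leq_mul ?IH //.
exact: leq_trans (leq_subr r l) (leqnSn l).
Qed.

Lemma ceil_divn n k : 0 < k -> exists q, [/\ n <= q * k, q * k < n + k & q <= n].
Proof.
move=> k_gt0; exists ((n + k.-1) %/ k); split.
- by have := ltn_ceil (n + k.-1) k_gt0; rewrite mulSn; lia.
- by apply: leq_ltn_trans (leq_divM _ _) _; lia.
- case: n => [|n]; first by rewrite add0n divn_small // prednK.
  rewrite -(leq_pmul2r k_gt0); apply: leq_trans (leq_divM _ _) _; nia.
Qed.

Section Cliques.
Variables (T : finType) (adj : rel T).

(* On ['I_n], [clique] and [num_edges] are convertible to [is_clique] and [edges_in]. *)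
Definition clique (S : {set T}) : bool :=
  [forall x in S, forall y in S, (x != y) ==> adj x y].

Definition deg_in (V : {set T}) (x : T) : nat := #|[set y in V | adj x y]|.

Definition cliques (V : {set T}) (r : nat) : {set {set T}} :=
  [set S : {set T} | [&& S \subset V, #|S| == r & clique S]].

Definition num_edges (S : {set T}) : nat :=
  #|[set e : {set T} | [&& #|e| == 2, e \subset S & clique e]]|.

Definition sigma_in (R : numDomainType) (V : {set T}) (t : R) : Prop :=
  forall x y, x \in V -> y \in V -> x != y -> ~~ adj x y ->
  (t <= (deg_in V x + deg_in V y)%:R)%R.

Lemma cliqueP (S : {set T}) :
  reflect (forall x y, x \in S -> y \in S -> x != y -> adj x y) (clique S).
Proof.
apply: (iffP forallP) => [H x y xS yS xy | H x].
  by move: (H x); rewrite xS => /forallP/(_ y); rewrite yS xy.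
by apply/implyP => xS; apply/forallP => y; apply/implyP => yS; apply/implyP; apply: H.
Qed.

Lemma clique_subset (A B : {set T}) : A \subset B -> clique B -> clique A.
Proof. by move=> /subsetP AB /cliqueP cB; apply/cliqueP => x y /AB xB /AB; apply: cB. Qed.

Lemma card_cliques2 (V : {set T}) : #|cliques V 2| = num_edges V.
Proof. by apply: eq_card => S; rewrite !inE andbCA. Qed.

Lemma bin_le_card_cliques (V L : {set T}) r :
  L \subset V -> clique L -> 'C(#|L|, r) <= #|cliques V r|.
Proof.
move=> LV cL; rewrite -cards_draws subset_leq_card //.
apply/subsetP => S; rewrite !inE => /andP[SL ->]; rewrite (subset_trans SL LV).
exact: clique_subset cL.
Qed.

Lemma clique_card_cliques (V L : {set T}) r : L \subset V -> clique L ->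
  #|V| <= 2 * #|L| -> 4 * r <= #|V| -> #|V| ^ r <= 4 ^ r * r`! * #|cliques V r|.
Proof.
move=> LV cL V_le_2L rV; have V_le : #|V| <= 4 * (#|L| - r) by lia.
apply: (@leq_trans ((4 * (#|L| - r)) ^ r)).
  by have [->|r_gt0] := posnP r; rewrite // leq_exp2r.
rewrite expnMn -mulnA leq_mul2l (leq_trans (expn_subn_le_ffact _ _)) ?orbT //.
by rewrite -bin_ffact mulnC leq_mul2l bin_le_card_cliques ?orbT.
Qed.

Lemma sum_card_cliques_at (V : {set T}) r :
  \sum_u #|[set S in cliques V r | u \in S]| = r * #|cliques V r|.
Proof.
have card_at u :
    #|[set S in cliques V r | u \in S]| = \sum_(S in cliques V r) (u \in S : nat).
  rewrite -sum1_card big_mkcond [RHS]big_mkcond.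
  by apply: eq_bigr => S _; rewrite inE; case: (S \in _).
under eq_bigr => u _ do rewrite card_at.
rewrite exchange_big /= mulnC -sum_nat_const.
apply: eq_bigr => S; rewrite inE => /and3P[_ /eqP <- _].
by rewrite -sum1_card [RHS]big_mkcond.
Qed.

Lemma exists_vertex_in_few_cliques (V H : {set T}) r v0 : v0 \in H ->
  exists2 v, v \in H &
    #|H| * #|[set S in cliques V r | v \in S]| <= r * #|cliques V r|.
Proof.
move=> v0H; have [v vH vmin] := arg_minnP (fun u => #|[set S in cliques V r | u \in S]|) v0H.
exists v => //; rewrite -sum_card_cliques_at -sum_nat_const.
apply: (@leq_trans (\sum_(u in H) #|[set S in cliques V r | u \in S]|)).
  exact: leq_sum.
by rewrite [leqRHS](bigID (mem H)) leq_addr.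
Qed.

Lemma low_degree_clique (R : numDomainType) (V : {set T}) (c : R) :
  sigma_in V (2 * c)%R -> clique [set x in V | (deg_in V x)%:R < c]%R.
Proof.
move=> sigV; apply/cliqueP => x y; rewrite !inE => /andP[xV dx] /andP[yV dy] xy.
apply/negPn/negP => /(sigV x y xV yV xy); rewrite natrD mulr2n mulrDl mul1r.
by move=> /(lt_le_trans (ltrD dx dy)); rewrite ltxx.
Qed.

Lemma deg_in_subset (V W : {set T}) x : W \subset V -> deg_in V x + #|W| <= deg_in W x + #|V|.
Proof.
move=> WV; have split_nbhd :
    [set y in V | adj x y] \subset [set y in W | adj x y] :|: (V :\: W).
  by apply/subsetP => y; rewrite !inE => /andP[-> ->]; case: (y \in W).
have := leq_trans (subset_leq_card split_nbhd) (leq_card_setU _ _).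
by rewrite cardsD (setIidPr WV) /deg_in; have := subset_leq_card WV; lia.
Qed.

Lemma sigma_in_subset (R : realDomainType) (V W : {set T}) (t : R) : W \subset V ->
  sigma_in V t -> sigma_in W (t - 2 * (#|V|%:R - #|W|%:R))%R.
Proof.
move=> WV sigV x y xW yW xy nxy; have := sigV x y (subsetP WV x xW) (subsetP WV y yW) xy nxy.
have := deg_in_subset x WV; have := deg_in_subset y WV.
rewrite -!(ler_nat R) !natrD; lra.
Qed.

Lemma sigma_in_le (R : numDomainType) (V : {set T}) (t t' : R) :
  (t' <= t)%R -> sigma_in V t -> sigma_in V t'.
Proof. by move=> t't sigV x y xV yV xy nxy; apply: le_trans t't (sigV x y xV yV xy nxy). Qed.

Lemma half_high_degree (R : realDomainType) (V : {set T}) (c : R) r :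
  sigma_in V (2 * c)%R -> 4 * r <= #|V| -> 2 * (4 ^ r * r`! * #|cliques V r|) <= #|V| ^ r ->
  #|V| <= 2 * #|[set x in V | c <= (deg_in V x)%:R]%R|.
Proof.
set H := [set x in V | _]; move=> sigV rV few; have [-> // | V_gt0] := posnP #|V|.
rewrite leqNgt; apply/negP => H_small; have HV : H \subset V.
  by apply/subsetP => x; rewrite inE => /andP[].
have : #|V| ^ r <= 4 ^ r * r`! * #|cliques V r|.
  apply: (@clique_card_cliques _ (V :\: H)) rV; first exact: subsetDl.
    apply: clique_subset (low_degree_clique sigV).
    by apply/subsetP => x; rewrite !inE ltNge => /andP[+ xV]; rewrite xV.
  by rewrite cardsDS //; lia.
by move: few (expn_gt0 #|V| r); rewrite V_gt0; lia.
Qed.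

Lemma exists_subset_card (A : {set T}) t :
  t <= #|A| -> exists2 X : {set T}, X \subset A & #|X| = t.
Proof.
rewrite -bin_gt0 -cards_draws => /card_gt0P[X]; rewrite inE => /andP[XA /eqP cX].
by exists X.
Qed.

Lemma num_edges_setU (A B : {set T}) : num_edges (A :|: B) <= num_edges A + #|B| * #|T|.
Proof.
pose pair (p : T * T) := [set p.1; p.2].
have cover : [set e : {set T} | [&& #|e| == 2, e \subset A :|: B & clique e]] \subset
    [set e : {set T} | [&& #|e| == 2, e \subset A & clique e]] :|: pair @: setX B setT.
  apply/subsetP => e; rewrite !inE => /and3P[/cards2P[x [y [xy ->]]] eAB ce].
  rewrite cards2 xy ce /=; case: (boolP ([set x; y] \subset A)) => //= /subsetPn[z zxy zA].
  have zB : z \in B by move/subsetP: eAB => /(_ z zxy); rewrite inE (negbTE zA).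
  apply/imsetP; move: zxy zB; rewrite !inE => /orP[] /eqP -> zB.
    by exists (x, y); rewrite // !inE zB.
  by exists (y, x); rewrite /pair 1?setUC // !inE zB.
apply: leq_trans (subset_leq_card cover) _; apply: leq_trans (leq_card_setU _ _) _.
by rewrite leq_add2l (leq_trans (leq_imset_card _ _)) // cardsX cardsT.
Qed.

Lemma extend_set (S : {set T}) t : #|S| + t <= #|T| ->
  exists2 S' : {set T}, #|S'| = #|S| + t &
  num_edges S' <= num_edges S + t * #|T|.
Proof.
move=> St_le; have tC : t <= #|~: S| by rewrite -(leq_add2l #|S|) cardsC.
have [X XC cX] := exists_subset_card tC.
exists (S :|: X); last by rewrite -cX; apply: num_edges_setU.
rewrite cardsU -cX; suff -> : S :&: X = set0 by rewrite cards0 subn0.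
by apply/setP => z; rewrite !inE; apply/andP => -[zS /(subsetP XC)]; rewrite inE zS.
Qed.

Section SimpleGraph.
Hypotheses (adj_sym : symmetric adj) (adj_irr : irreflexive adj).

Lemma card_cliques_nbhd (V : {set T}) r v : v \in V ->
  #|cliques [set y in V | adj v y] r| <= #|[set S in cliques V r.+1 | v \in S]|.
Proof.
move=> vV; set W := [set y in V | adj v y].
have vW (S : {set T}) : S \subset W -> v \notin S.
  by move=> /subsetP SW; apply/negP => /SW; rewrite inE adj_irr andbF.
rewrite -(@card_in_imset _ _ (fun S => v |: S)); last first.
  move=> S1 S2; rewrite !inE => /and3P[S1W _ _] /and3P[S2W _ _] e.
  by rewrite -(setU1K (vW _ S1W)) e setU1K // vW.
apply/subset_leq_card/subsetP => _ /imsetP[S + ->]; rewrite !inE eqxx orTb andbT.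
move=> /and3P[/subsetP SW /eqP cS cl].
rewrite cardsU1 vW ?cS; last by apply/subsetP.
rewrite subUset sub1set vV eqxx /=; apply/andP; split.
  by apply/subsetP => y /SW; rewrite inE => /andP[].
apply/cliqueP => x y; rewrite !inE => /orP[/eqP ->|xS] /orP[/eqP ->|yS].
- by rewrite eqxx.
- by move: (SW y yS); rewrite inE => /andP[].
- by move: (SW x xS); rewrite inE adj_sym => /andP[].
- by move/cliqueP: cl; apply.
Qed.

End SimpleGraph.
End Cliques.

Local Open Scope ring_scope.

Section Estimates.
Variable R : realFieldType.

Lemma invn_mul_subr_invSn k : (0 < k)%N ->
  k%:R^-1 * (1 - k.+1%:R^-1) = k.+1%:R^-1 :> R.
Proof.
by move=> k_gt0; rewrite -addn1 natrD; field; rewrite natr1 !pnatr_eq0 /= -lt0n.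
Qed.

Lemma nbhd_sigma_bound k (al n m : R) : (0 < k)%N -> 0 <= al -> 0 <= n ->
  (1 - k.+1%:R^-1 - al) * n <= m -> n <= 3 * m ->
  2 * (1 - k%:R^-1 - 6 * al) * m <= 2 * (1 - k.+1%:R^-1 - al) * n - 2 * (n - m).
Proof.
move=> k_gt0 al_ge0 n_ge0 m_ge n_le.
have b_ge0 : 0 <= k%:R^-1 :> R by rewrite invr_ge0.
have b_le1 : k%:R^-1 <= 1 :> R by rewrite invf_le1 ?ltr0n // ler1n.
have := ler_wpM2l b_ge0 m_ge; have := ler_wpM2l al_ge0 n_le.
have := ler_wpM2r (mulr_ge0 al_ge0 n_ge0) b_le1.
have := invn_mul_subr_invSn k_gt0; set a := k.+1%:R^-1; set b := k%:R^-1 => ba.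
have : a * n = b * n - b * a * n by rewrite -{1}ba; ring.
lra.
Qed.

Lemma nbhd_sparse_size k (C al n m s : R) : (0 < k)%N -> 0 <= C -> 0 <= al -> 0 <= n ->
  (1 - k.+1%:R^-1 - al) * n <= m -> m <= n -> (k%:R^-1 - C * (6 * al)) * m <= s ->
  (k.+1%:R^-1 - (6 * C + 1) * al) * n <= s.
Proof.
move=> k_gt0 C_ge0 al_ge0 n_ge0 m_ge m_le.
have b_ge0 : 0 <= k%:R^-1 :> R by rewrite invr_ge0.
have b_le1 : k%:R^-1 <= 1 :> R by rewrite invf_le1 ?ltr0n // ler1n.
have := ler_wpM2l b_ge0 m_ge; have := ler_wpM2r (mulr_ge0 al_ge0 n_ge0) b_le1.
have := ler_wpM2l (mulr_ge0 C_ge0 (mulr_ge0 (ler0n R 6) al_ge0)) m_le.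
have := invn_mul_subr_invSn k_gt0; set a := k.+1%:R^-1; set b := k%:R^-1 => ba.
have : a * n = b * n - b * a * n by rewrite -{1}ba; ring.
lra.
Qed.

Lemma averaging_bound j (n h m f K E : R) : 0 < n -> n <= 2 * h -> n <= 3 * m ->
  0 <= f -> 0 <= E -> h * f <= j.+1%:R * K -> K <= E * n ^+ j.+1 ->
  f <= 2 * j.+1%:R * 3 ^+ j * E * m ^+ j.
Proof.
move=> n_gt0 n_le_2h n_le_3m f_ge0 E_ge0 hf K_le.
have nf : n * f <= n * (2 * j.+1%:R * E * n ^+ j).
  have := ler_wpM2r f_ge0 n_le_2h; have := le_trans hf (ler_wpM2l (ler0n _ _) K_le).
  have -> : n * (2 * j.+1%:R * E * n ^+ j) = 2 * (j.+1%:R * (E * n ^+ j.+1)).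
    by rewrite exprS; ring.
  lra.
apply: (@le_trans _ _ (2 * j.+1%:R * E * n ^+ j)); first by rewrite -(ler_pM2l n_gt0).
have -> : 2 * j.+1%:R * 3 ^+ j * E * m ^+ j = 2 * j.+1%:R * E * (3 * m) ^+ j.
  by rewrite exprMn; ring.
by rewrite ler_wpM2l ?mulr_ge0 // lerXn2r // nnegrE; lra.
Qed.

Lemma nbhd_sparse_edges (C al m n s : R) : 0 <= C -> 0 <= al -> 0 <= m -> m <= n ->
  s <= C * (6 * al) * m ^+ 2 -> s <= (6 * C + 1) * al * n ^+ 2.
Proof.
move=> C_ge0 al_ge0 m_ge0 m_le_n s_le; apply: le_trans s_le _.
have n_ge0 := le_trans m_ge0 m_le_n.
have m2_le : m ^+ 2 <= n ^+ 2 by rewrite ler_sqr ?nnegrE.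
have := ler_wpM2l (mulr_ge0 C_ge0 (mulr_ge0 (ler0n R 6) al_ge0)) m2_le.
have := mulr_ge0 al_ge0 (exprn_ge0 2 n_ge0); lra.
Qed.

End Estimates.

Definition sparse_set_property (R : realFieldType) (k : nat) : Prop :=
  exists C a : R, 0 < C /\ 0 < a /\ forall al : R, 0 < al -> al <= a ->
  exists e : R, 0 < e /\ exists N : nat,
  forall (T : finType) (adj : rel T) (V : {set T}),
  symmetric adj -> irreflexive adj -> (N <= #|V|)%N ->
  #|cliques adj V k.+1|%:R <= e * #|V|%:R ^+ k.+1 ->
  sigma_in adj V (2 * (1 - k%:R^-1 - al) * #|V|%:R) ->
  exists2 S : {set T}, S \subset V &
    (k%:R^-1 - C * al) * #|V|%:R <= #|S|%:R /\
    (num_edges adj S)%:R <= C * al * #|V|%:R ^+ 2.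

Section Induction.
Variable R : realFieldType.

Lemma sparse_set_property1 : sparse_set_property R 1.
Proof.
exists 1, 1; do 2!split=> //; move=> al al_gt0 _; exists al; split=> //.
exists 0%N => T adj V _ _ _ few_edges _; exists V => //; split.
  by rewrite invr1 mul1r ler_piMl // lerBlDr lerDl ltW.
by rewrite -card_cliques2 mul1r.
Qed.

Lemma exists_large_nbhd_few_cliques (T : finType) (adj : rel T) (V : {set T}) k (al E : R) :
  symmetric adj -> irreflexive adj -> (0 < k)%N -> 0 <= al -> al * 6 <= 1 -> 0 <= E ->
  (4 * k.+2 < #|V|)%N -> sigma_in adj V (2 * (1 - k.+1%:R^-1 - al) * #|V|%:R) ->
  #|cliques adj V k.+2|%:R <= E * #|V|%:R ^+ k.+2 ->
  (2 * (4 ^ k.+2 * k.+2`! * #|cliques adj V k.+2|) <= #|V| ^ k.+2)%N ->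
  exists2 W : {set T}, W \subset V &
    [/\ (1 - k.+1%:R^-1 - al) * #|V|%:R <= #|W|%:R, #|V|%:R <= 3 * #|W|%:R :> R &
        #|cliques adj W k.+1|%:R <= 2 * k.+2%:R * 3 ^+ k.+1 * E * #|W|%:R ^+ k.+1].
Proof.
move=> adj_sym adj_irr k_gt0 al_ge0 al_small E_ge0 V_big sigV few_cliques very_few.
set n := #|V| in V_big sigV few_cliques very_few *.
have n_gt0 : 0 < n%:R :> R by rewrite ltr0n; lia.
pose c := (1 - k.+1%:R^-1 - al) * n%:R.
pose H := [set x in V | c <= (deg_in adj V x)%:R].
have H_big : (n <= 2 * #|H|)%N.
  by apply: (@half_high_degree _ _ _ _ _ k.+2); [rewrite /c mulrA | lia | ].
have /set0Pn[v0 v0H] : H != set0.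
  by apply: contraTneq H_big => ->; rewrite cards0 -ltnNge; lia.
have [v /setIdP[vV m_big] v_few] := exists_vertex_in_few_cliques adj V k.+2 v0H.
pose W := [set y in V | adj v y]; exists W.
  by apply/subsetP => y; rewrite inE => /andP[].
have n_le_3m : n%:R <= 3 * #|W|%:R :> R.
  have : k.+1%:R^-1 <= 2^-1 :> R by rewrite lef_pV2 ?posrE ?ltr0n // ler_nat ltnS.
  move/(ler_wpM2r (ltW n_gt0)); have := ler_wpM2r (ltW n_gt0) al_small.
  move: m_big; rewrite /c /deg_in -/W; move: (k.+1%:R^-1) => a1; lra.
split=> //; apply: le_trans (_ : _ <= #|[set S in cliques adj V k.+2 | v \in S]|%:R) _.
  by rewrite ler_nat card_cliques_nbhd.
apply: (@averaging_bound _ _ n%:R #|H|%:R _ _ #|cliques adj V k.+2|%:R) => //.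
- by move: H_big; rewrite -(ler_nat R) natrM.
- by rewrite -!natrM ler_nat.
Qed.

Lemma sparse_set_propertyS k : (0 < k)%N ->
  sparse_set_property R k -> sparse_set_property R k.+1.
Proof.
move=> k_gt0 [C [a [C_gt0 [a_gt0 IH]]]].
exists (6 * C + 1), (Num.min 1 a / 6); split; first lra.
split; first by rewrite divr_gt0 // lt_min ltr01.
move=> al al_gt0; rewrite ler_pdivlMr // le_min => /andP[al_small al_le_a].
have [e [e_gt0 [N IHal]]] := IH (6 * al) (ltac:(lra)) (ltac:(lra)).
(* E makes the clique bound inherited by the neighbourhood equal to e; D^-1 leaves
   no room for a clique on half of the vertices. *)
pose E := e / (2 * k.+2%:R * 3 ^+ k.+1).
pose D := (2 * (4 ^ k.+2 * k.+2`!))%N.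
have E_gt0 : 0 < E by rewrite divr_gt0 ?mulr_gt0 ?exprn_gt0.
have D_gt0 : (0 < D)%N by rewrite (muln_gt0 2) (muln_gt0 (4 ^ _)) expn_gt0 fact_gt0.
exists (Num.min E D%:R^-1); split; first by rewrite lt_min E_gt0 invr_gt0 ltr0n.
exists (3 * N + 4 * k.+2).+1 => T adj V adj_sym adj_irr V_big few_cliques sigV.
have very_few : (2 * (4 ^ k.+2 * k.+2`! * #|cliques adj V k.+2|) <= #|V| ^ k.+2)%N.
  rewrite mulnA -/D -(ler_nat R) natrM natrX mulrC -ler_pdivlMr ?ltr0n // mulrC.
  by apply: le_trans few_cliques _; rewrite ler_wpM2r ?exprn_ge0 // ge_min lexx orbT.
have few_cliques_E : #|cliques adj V k.+2|%:R <= E * #|V|%:R ^+ k.+2.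
  by apply: le_trans few_cliques _; rewrite ler_wpM2r ?exprn_ge0 // ge_min lexx.
have V_big4 : (4 * k.+2 < #|V|)%N by apply: leq_trans V_big; rewrite ltnS leq_addl.
have [W WV [m_big n_le_3m K_W]] := exists_large_nbhd_few_cliques adj_sym adj_irr k_gt0
  (ltW al_gt0) al_small (ltW E_gt0) V_big4 sigV few_cliques_E very_few.
have E_e : 2 * k.+2%:R * 3 ^+ k.+1 * E = e.
  by rewrite /E mulrC divfK // gt_eqF // !mulr_gt0 ?exprn_gt0.
rewrite E_e in K_W.
have sigW : sigma_in adj W (2 * (1 - k%:R^-1 - 6 * al) * #|W|%:R).
  apply: sigma_in_le (sigma_in_subset WV sigV).
  by apply: nbhd_sigma_bound => //; apply: ltW.
have N_le_m : (N <= #|W|)%N.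
  have n_le_3m' : (#|V| <= 3 * #|W|)%N by rewrite -(ler_nat R) natrM.
  rewrite -(leq_pmul2l (isT : 0 < 3)%N); apply: leq_trans n_le_3m'.
  exact: leq_trans (leq_addr _ _) (ltnW V_big).
have [S SW [S_big S_sparse]] := IHal T adj W adj_sym adj_irr N_le_m K_W sigW.
exists S; first exact: subset_trans SW WV.
have m_le_n : #|W|%:R <= #|V|%:R :> R by rewrite ler_nat subset_leq_card.
split; first exact: nbhd_sparse_size (ltW C_gt0) (ltW al_gt0) (ler0n _ _) m_big m_le_n S_big.
exact: nbhd_sparse_edges (ltW C_gt0) (ltW al_gt0) (ler0n _ _) m_le_n S_sparse.
Qed.

End Induction.

Lemma sparse_set_property_all (R : realFieldType) k : (0 < k)%N -> sparse_set_property R k.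
Proof.
elim: k => [//|[|k] IH] _; first exact: sparse_set_property1.
exact: sparse_set_propertyS (IH _).
Qed.

Lemma padding_size_bound (R : realFieldType) k q s (C al n : R) : (0 < k)%N ->
  0 <= C * al * n -> (k * q)%N%:R <= n + k%:R -> (k%:R^-1 - C * al) * n <= s%:R ->
  (q - s)%N%:R <= C * al * n + 1.
Proof.
move=> k_gt0 Caln_ge0 qk_le s_big; have [q_le_s | s_lt_q] := leqP q s.
  by move: q_le_s; rewrite -subn_eq0 => /eqP ->; rewrite addr_ge0.
have k_gt0' : 0 < k%:R :> R by rewrite ltr0n.
rewrite (natrB _ (ltnW s_lt_q)) -(ler_pM2l k_gt0').
have : k%:R * ((k%:R^-1 - C * al) * n) = n - k%:R * (C * al * n).
  by field; rewrite gt_eqF.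
have := ler_wpM2l (ltW k_gt0') s_big; rewrite natrM in qk_le; lra.
Qed.

Lemma padding_edges_bound (R : rcfType) (C al n t E : R) : 0 <= C -> 0 <= al -> 0 <= n ->
  16 * C ^+ 2 * al <= 1 -> 2 <= Num.sqrt al * n ->
  E <= C * al * n ^+ 2 -> t <= C * al * n + 1 -> E + t * n <= Num.sqrt al * n ^+ 2.
Proof.
move=> C_ge0 al_ge0 n_ge0 al_small sn_big E_le t_le.
set s := Num.sqrt al in sn_big *; have s_ge0 : 0 <= s := sqrtr_ge0 al.
have al_s : al = s ^+ 2 by rewrite sqr_sqrtr.
rewrite al_s in al_small E_le t_le.
have Cs_le : 4 * C * s <= 1.
  rewrite -(ler_sqr (x := 4 * C * s)) ?nnegrE ?mulr_ge0 //.
  by rewrite expr1n (_ : (4 * C * s) ^+ 2 = 16 * C ^+ 2 * s ^+ 2) //; ring.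
have := ler_wpM2r n_ge0 t_le; have := ler_wpM2r (mulr_ge0 s_ge0 (exprn_ge0 2 n_ge0)) Cs_le.
have := ler_wpM2r n_ge0 sn_big; lra.
Qed.

Lemma le_mul_archi_bound (R : archiRealFieldType) (x y : R) n : 0 < x -> 0 <= y ->
  (Num.Def.archi_bound (y / x) <= n)%N -> y <= x * n%:R.
Proof.
move=> x_gt0 y_ge0 n_big; have := archi_boundP (divr_ge0 y_ge0 (ltW x_gt0)).
rewrite ltr_pdivrMr // => /ltW/le_trans; apply.
by rewrite mulrC ler_wpM2l ?ler_nat // ltW.
Qed.

Lemma pad_sparse_set (R : rcfType) (T : finType) (adj : rel T) k (C al : R) (S0 : {set T}) :
  (0 < k)%N -> 0 <= C -> 0 <= al -> 16 * C ^+ 2 * al <= 1 -> 2 <= Num.sqrt al * #|T|%:R ->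
  (k%:R^-1 - C * al) * #|T|%:R <= #|S0|%:R ->
  (num_edges adj S0)%:R <= C * al * #|T|%:R ^+ 2 ->
  exists2 S : {set T}, (num_edges adj S)%:R <= Num.sqrt al * #|T|%:R ^+ 2 &
    #|T|%:R / k%:R <= #|S|%:R :> R.
Proof.
move=> k_gt0 C_ge0 al_ge0 al_small sn_big S0_big S0_sparse.
have [q [T_le_qk qk_lt q_le_T]] := ceil_divn #|T| k_gt0.
have [|S cardS edgesS] := extend_set adj (S := S0) (t := q - #|S0|).
  by have := subset_leq_card (subsetT S0); rewrite cardsT; lia.
have t_le : (q - #|S0|)%:R <= C * al * #|T|%:R + 1.
  apply: padding_size_bound k_gt0 _ _ S0_big; first by rewrite !mulr_ge0.
  by rewrite -natrD ler_nat mulnC ltnW.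
exists S.
  apply: le_trans (padding_edges_bound C_ge0 al_ge0 (ler0n _ _) al_small sn_big S0_sparse t_le).
  by rewrite -natrM -natrD ler_nat.
rewrite cardS ler_pdivrMr ?ltr0n // -natrM ler_nat (leq_trans T_le_qk) //.
by rewrite leq_mul2r -leq_subLR leqnn orbT.
Qed.

Lemma num_Kr_cliques n (adj : rel 'I_n) r : num_Kr adj r = #|cliques adj [set: 'I_n] r|.
Proof. by apply: eq_card => S; rewrite !inE subsetT. Qed.

Lemma sigma_ge_in (R : realType) n (adj : rel 'I_n) (t : R) :
  sigma_ge adj t -> sigma_in adj [set: 'I_n] t.
Proof.
have deg_in_setT x : deg_in adj [set: 'I_n] x = deg adj x.
  by apply: eq_card => y; rewrite !inE.
by move=> sig x y _ _; rewrite !deg_in_setT; apply: sig.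
Qed.

Theorem proposition2p3 (R : realType) (r : nat) : (2 <= r)%N ->
  exists alpha0 : R, 0 < alpha0 /\
  forall alpha : R, 0 < alpha <= alpha0 ->
  exists eps0 : R, 0 < eps0 /\
  forall eps : R, 0 < eps <= eps0 ->
  exists n0 : nat, forall n : nat, (n0 <= n)%N ->
  forall adj : rel 'I_n, symmetric adj -> irreflexive adj ->
  (num_Kr adj r)%:R <= eps * n%:R ^+ r ->
  sigma_ge adj (2 * (1 - (r.-1)%:R^-1 - alpha) * n%:R) ->
  exists S : {set 'I_n},
    gamma_indep adj (Num.sqrt alpha) S /\ (n%:R / (r.-1)%:R : R) <= (#|S|)%:R.
Proof.
case: r => [//|k]; rewrite ltnS => k_gt0 /=.
have [C [a [C_gt0 [a_gt0 sparse_k]]]] := sparse_set_property_all R k_gt0.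
have C2_gt0 : 0 < 16 * C ^+ 2 by rewrite mulr_gt0 ?exprn_gt0.
exists (Num.min a (16 * C ^+ 2)^-1); split; first by rewrite lt_min a_gt0 invr_gt0.
move=> al /andP[al_gt0]; rewrite le_min => /andP[al_le_a al_small].
have [e [e_gt0 [N sparse_al]]] := sparse_k al al_gt0 al_le_a.
exists e; split=> // eps /andP[eps_gt0 eps_le].
exists (maxn N (Num.Def.archi_bound (2 / Num.sqrt al))); move=> n.
rewrite geq_max => /andP[N_le n_big] adj adj_sym adj_irr few_Kr sigG.
have [|||S0 _ [S0_big S0_sparse]] := sparse_al _ adj setT adj_sym adj_irr.
- by rewrite cardsT card_ord.
- rewrite cardsT card_ord -num_Kr_cliques; apply: le_trans few_Kr _.
  by rewrite ler_wpM2r ?exprn_ge0.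
- by rewrite cardsT card_ord; apply: sigma_ge_in.
rewrite cardsT in S0_big S0_sparse.
have [||S S_sparse S_big] := pad_sparse_set k_gt0 (ltW C_gt0) (ltW al_gt0) _ _ S0_big S0_sparse.
- by move: al_small; rewrite -[_^-1]mul1r ler_pdivlMr // mulrC.
- by rewrite card_ord le_mul_archi_bound ?sqrtr_gt0.
by exists S; rewrite card_ord in S_sparse S_big.
Qed.
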